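(* Let ${\cal H}\subset{\cal H}_0$, ${\mathcal D}$, $b$, $\mu_\ell^{-1}$, $\epsilon_\ell$, $a_\ell$ ($\ell=1,2$) be as in the context (the standing assumptions there hold), and let ${\cal H}_N\subset{\cal H}$ be a finite-dimensional subspace. Suppose that, with $0<C_{{\rm dis},N,1}<\infty$, $$\inf_{u_N\in{\cal H}_N\setminus\{0\}}\sup_{v_N\in{\cal H}_N\setminus\{0\}}\frac{|a_1(u_N,v_N)|}{\|u_N\|_{{\cal H}}\|v_N\|_{{\cal H}}}\ge\frac{1}{C_{{\rm dis},N,1}},$$ for all $v_N\in{\cal H}_N\setminus\{0\}$, $\sup_{u_N\in{\cal H}_N\setminus\{0\}}|a_1(u_N,v_N)|>0$, and $$\Big(\|\mu_1^{-1}-\mu_2^{-1}\|_{{\cal H}_0\to{\cal H}_0}+\|\epsilon_1-\epsilon_2\|_{{\cal H}_0\to{\cal H}_0}\Big)C_{{\rm dis},N,1}\le\tfrac12.$$ Then $$\inf_{u_N\in{\cal H}_N\setminus\{0\}}\sup_{v_N\in{\cal H}_N\setminus\{0\}}\frac{|a_2(u_N,v_N)|}{\|u_N\|_{{\cal H}}\|v_N\|_{{\cal H}}}\ge\frac{1}{2C_{{\rm dis},N,1}}$$ and, for all $v_N\in{\cal H}_N\setminus\{0\}$, $\sup_{u_N\in{\cal H}_N\setminus\{0\}}|a_2(u_N,v_N)|>0$.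
   Context: Standing assumptions: ${\cal H}\subset{\cal H}_0$ are complex Hilbert spaces with $\|v\|_{{\cal H}_0}\le\|v\|_{{\cal H}}$ for $v\in{\cal H}$, and ${\cal H}_0$ is identified with its dual so that ${\cal H}\subset{\cal H}_0\subset{\cal H}^*$. ${\mathcal D}:{\cal H}\to{\cal H}_0$ is linear with $\|{\mathcal D}\|_{{\cal H}\to{\cal H}_0}\le 1$; $b(\cdot,\cdot)$ is a continuous sesquilinear form on ${\cal H}$; for $\ell=1,2$, $\mu_\ell^{-1}:{\cal H}_0\to{\cal H}_0$ and $\epsilon_\ell:{\cal H}_0\to{\cal H}_0$ are bounded linear operators, and $a_\ell(u,v):=(\mu_\ell^{-1}{\mathcal D}u,{\mathcal D}v)_{{\cal H}_0}+b(u,v)-(\epsilon_\ell u,v)_{{\cal H}_0}$. For $\ell=1,2$ there exist $C_{{\rm G1},\ell},C_{{\rm G2},\ell}>0$ with $|a_\ell(v,v)+C_{{\rm G2},\ell}\|v\|_{{\cal H}_0}^2|\ge C_{{\rm G1},\ell}\|v\|_{{\cal H}}^2$ for all $v\in{\cal H}$. *)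

From mathcomp Require Import all_boot all_order all_algebra.
From mathcomp Require Import all_classical all_reals all_analysis.
From mathcomp Require Export complex.
Import Order.TTheory GRing.Theory Num.Theory.

Set Implicit Arguments.
Unset Strict Implicit.
Unset Printing Implicit Defensive.

Local Open Scope ring_scope.
Local Open Scope classical_set_scope.

Section Defs.
Variable R : realType.
Local Notation C := R[i].

Definition cabs (z : C) : R := Normc.normc z.

Definition rC (x : R) : C := Complex x 0.

Definition inner_product (V : lmodType C) (ip : V -> V -> C) : Prop :=
  [/\ forall (a : C) (u v w : V), ip (a *: u + v) w = a * ip u w + ip v w,
      forall u v : V, ip v u = conjc (ip u v),
      forall v : V, 0 <= ip v v &
      forall v : V, ip v v = 0 -> v = 0].

Definition ipnorm (V : lmodType C) (ip : V -> V -> C) (v : V) : R :=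
  Num.sqrt (complex.Re (ip v v)).

Definition ip_complete (V : lmodType C) (ip : V -> V -> C) : Prop :=
  forall u : nat -> V,
    (forall e : R, 0 < e -> exists N : nat, forall m n : nat,
        (N <= m)%N -> (N <= n)%N -> ipnorm ip (u m - u n) < e) ->
    exists l : V, forall e : R, 0 < e -> exists N : nat, forall n : nat,
        (N <= n)%N -> ipnorm ip (u n - l) < e.

Definition hilbert (V : lmodType C) (ip : V -> V -> C) : Prop :=
  inner_product ip /\ ip_complete ip.

Definition bounded_op (V W : lmodType C) (ipV : V -> V -> C) (ipW : W -> W -> C)
  (A : V -> W) : Prop :=
  exists M : R, forall v : V, ipnorm ipW (A v) <= M * ipnorm ipV v.

Definition opnorm (V W : lmodType C) (ipV : V -> V -> C) (ipW : W -> W -> C)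
  (A : V -> W) : R :=
  sup [set ipnorm ipW (A v) / ipnorm ipV v | v in [set v : V | v != 0]].

Definition cont_sesquilinear (V : lmodType C) (ip : V -> V -> C)
  (b : V -> V -> C) : Prop :=
  [/\ forall (a : C) (u u' v : V), b (a *: u + u') v = a * b u v + b u' v,
      forall (a : C) (u v v' : V), b u (a *: v + v') = conjc a * b u v + b u v' &
      exists M : R, forall u v : V, cabs (b u v) <= M * ipnorm ip u * ipnorm ip v].

(* a(u,v) := (mu^{-1} D u, D v)_{H0} + b(u,v) - (eps u, v)_{H0},
   where iota : H -> H0 is the inclusion *)
Definition aform (V V0 : lmodType C) (ip0 : V0 -> V0 -> C) (iota : V -> V0)
  (D : V -> V0) (b : V -> V -> C) (muinv eps : V0 -> V0) (u v : V) : C :=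
  ip0 (muinv (D u)) (D v) + b u v - ip0 (eps (iota u)) (iota v).

Definition findim_subspace (V : lmodType C) (HN : set V) : Prop :=
  exists s : seq V, HN = [set v | exists c : 'I_(size s) -> C,
                                   v = \sum_(i < size s) c i *: s`_i].

Definition nonzero_in (V : lmodType C) (HN : set V) : set V :=
  [set v | HN v /\ v != 0].

Definition infsup (V : lmodType C) (ip : V -> V -> C) (HN : set V)
  (a : V -> V -> C) : \bar R :=
  ereal_inf [set ereal_sup [set (cabs (a u v) / (ipnorm ip u * ipnorm ip v))%:E
                           | v in nonzero_in HN]
            | u in nonzero_in HN].

Definition adjoint_nondeg (V : lmodType C) (HN : set V) (a : V -> V -> C) : Prop :=
  forall v : V, nonzero_in HN v ->
    (0 < ereal_sup [set (cabs (a u v))%:E | u in nonzero_in HN])%E.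

End Defs.

From mathcomp Require Import all_boot all_order all_algebra.
From mathcomp Require Import all_classical all_reals all_analysis.
From mathcomp Require Import complex.
From mathcomp Require Import ring lra.
Import Order.TTheory GRing.Theory Num.Theory.
Local Open Scope ring_scope.
Local Open Scope classical_set_scope.

(* The forms a_1 and a_2 differ only through mu_1^-1 - mu_2^-1 and eps_1 - eps_2,
   so Cauchy-Schwarz gives |a_1(u,v)| <= |a_2(u,v)| + c ||u|| ||v||, with c the
   sum of the two operator norms; hence the inf-sup constant drops by at most
   c <= 1/(2 C_dis).  A positive inf-sup constant on H_N says that the Gram
   matrix of a_2 in a basis of H_N has trivial left kernel; being square, it is
   invertible, and this is the adjoint nondegeneracy. *)

Section InnerProduct.
Context {R : realType} {V : lmodType R[i]} {ip : V -> V -> R[i]}.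
Hypothesis ipP : inner_product ip.

Lemma ipDZl a u v w : ip (a *: u + v) w = a * ip u w + ip v w.
Proof. by case: ipP. Qed.

Lemma ipC u v : ip v u = conjc (ip u v).
Proof. by case: ipP. Qed.

Lemma ipvv_ge0 v : 0 <= ip v v.
Proof. by case: ipP. Qed.

Lemma ipvv_eq0 v : ip v v = 0 -> v = 0.
Proof. by case: ipP => _ _ _; apply. Qed.

Lemma ip0l w : ip 0 w = 0.
Proof.
apply: (addrI (ip 0 w)); rewrite addr0 -{1}[ip 0 w]mul1r -ipDZl.
by rewrite scale1r addr0.
Qed.

Lemma ipDl u v w : ip (u + v) w = ip u w + ip v w.
Proof. by rewrite -[u]scale1r ipDZl mul1r scale1r. Qed.

Lemma ipZl a u w : ip (a *: u) w = a * ip u w.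
Proof. by rewrite -[a *: u]addr0 ipDZl ip0l addr0. Qed.

Lemma ipNl u w : ip (- u) w = - ip u w.
Proof. by rewrite -scaleN1r ipZl mulN1r. Qed.

Lemma ipBl u v w : ip (u - v) w = ip u w - ip v w.
Proof. by rewrite ipDl ipNl. Qed.

Lemma ip0r w : ip w 0 = 0.
Proof. by rewrite ipC ip0l conjc0. Qed.

Lemma ipDr u v w : ip w (u + v) = ip w u + ip w v.
Proof. by rewrite ipC ipDl rmorphD /= -!ipC. Qed.

Lemma ipZr a u w : ip w (a *: u) = conjc a * ip w u.
Proof. by rewrite ipC ipZl rmorphM /= -ipC. Qed.

Lemma ipNr u w : ip w (- u) = - ip w u.
Proof. by rewrite -scaleN1r ipZr rmorphN rmorph1 mulN1r. Qed.

Lemma ipnorm_ge0 v : 0 <= ipnorm ip v.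
Proof. exact: sqrtr_ge0. Qed.

Lemma ipvvE v : ip v v = ((ipnorm ip v) ^+ 2)%:C%C.
Proof.
have := ipvv_ge0 v; rewrite /ipnorm lecE /=.
by case: (ip v v) => x y /= /andP[/eqP -> x_ge0]; rewrite sqr_sqrtr.
Qed.

Lemma ipnorm0 : ipnorm ip 0 = 0.
Proof. by rewrite /ipnorm ip0l /= sqrtr0. Qed.

Lemma ipnorm_gt0 v : (0 < ipnorm ip v) = (v != 0).
Proof.
rewrite lt_neqAle ipnorm_ge0 andbT eq_sym; congr negb.
apply/eqP/eqP => [v0|->]; last exact: ipnorm0.
by apply: ipvv_eq0; rewrite ipvvE v0 expr0n.
Qed.

Lemma ipnormN v : ipnorm ip (- v) = ipnorm ip v.
Proof. by rewrite /ipnorm ipNl ipNr opprK. Qed.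

End InnerProduct.

Section ComplexModulus.
Context {R : realType}.
Implicit Types z : R[i].

Lemma cabs_ge0 z : 0 <= cabs z.
Proof. by case: z => x y; rewrite /cabs sqrtr_ge0. Qed.

Lemma cabs_gt0 z : (0 < cabs z) = (z != 0).
Proof.
rewrite lt_neqAle cabs_ge0 andbT eq_sym; congr negb.
by apply/eqP/eqP => [/Normc.eq0_normc|->] //; rewrite /cabs Normc.normc0.
Qed.

Lemma mul_conjc z : z * conjc z = ((cabs z) ^+ 2)%:C%C.
Proof.
case: z => x y; rewrite /cabs /= sqr_sqrtr ?addr_ge0 ?sqr_ge0 //.
by apply/eqP; rewrite eq_complex /=; apply/andP; split; apply/eqP; ring.
Qed.

Lemma Re_le_cabs z : complex.Re z <= cabs z.
Proof.
case: z => x y; rewrite /cabs /=; apply: le_trans (ler_norm x) _.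
by rewrite -sqrtr_sqr ler_sqrt ?addr_ge0 ?sqr_ge0 // lerDl sqr_ge0.
Qed.

Lemma cabsD z w : cabs (z + w) <= cabs z + cabs w.
Proof. exact: le_normcD. Qed.

Lemma cabsB z w : cabs (z - w) <= cabs z + cabs w.
Proof. by rewrite -[cabs w]normcN cabsD. Qed.

End ComplexModulus.

Section CauchySchwarz.
Context {R : realType} {V : lmodType R[i]} {ip : V -> V -> R[i]}.
Hypothesis ipP : inner_product ip.

(* Expand [0 <= (x + l y, x + l y)] with [l = - (x, y) / |y|^2]. *)
Lemma cauchy_schwarz x y : cabs (ip x y) <= ipnorm ip x * ipnorm ip y.
Proof.
have [->|y_neq0] := eqVneq y 0.
  by rewrite (ip0r ipP) (ipnorm0 ipP) mulr0 /cabs Normc.normc0.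
have q_gt0 : 0 < ipnorm ip y by rewrite (ipnorm_gt0 ipP).
set r := ip x y; set p := ipnorm ip x; set q := ipnorm ip y.
set Q : R[i] := (q ^+ 2)%:C%C.
have Q_neq0 : Q != 0 by rewrite (inj_eq (@complexI _)) expf_eq0 /= gt_eqF.
have := ipvv_ge0 ipP (x + (- r / Q) *: y).
rewrite (ipDl ipP) !(ipDr ipP) !(ipZl ipP) !(ipZr ipP) (ipC ipP x y).
rewrite !(ipvvE ipP) -/p -/q -/r -/Q.
have -> : conjc (- r / Q) = - conjc r / Q.
  by rewrite fmorph_div rmorphN; congr (_ * _^-1); rewrite /Q /= oppr0.
have collect P s Q' : Q' != 0 ->
    P + - s / Q' * r + (- r / Q' * s + - r / Q' * (- s / Q' * Q')) = P - r * s / Q'.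
  by move=> Q'_neq0; field.
rewrite collect // (mul_conjc r) -fmorphV -rmorphM -rmorphB /= ler0c subr_ge0.
rewrite ler_pdivrMr ?exprn_gt0 // -exprMn => sq_le.
by rewrite -(@ler_pXn2r _ 2) // nnegrE ?cabs_ge0 ?mulr_ge0 ?ipnorm_ge0.
Qed.

Lemma ipnormD x y : ipnorm ip (x + y) <= ipnorm ip x + ipnorm ip y.
Proof.
have := congr1 (@complex.Re R) (ipvvE ipP (x + y)).
rewrite (ipDl ipP) !(ipDr ipP) (ipC ipP x y) !(ipvvE ipP) /= !raddfD /=.
have -> : complex.Re (conjc (ip x y)) = complex.Re (ip x y) by case: (ip x y).
move=> sq_expand; have Re_le := le_trans (Re_le_cabs (ip x y)) (cauchy_schwarz x y).
rewrite -(@ler_pXn2r _ 2) ?nnegrE ?addr_ge0 ?ipnorm_ge0 //; lra.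
Qed.

Lemma ipnormB x y : ipnorm ip (x - y) <= ipnorm ip x + ipnorm ip y.
Proof. by rewrite -(ipnormN ipP y) ipnormD. Qed.

End CauchySchwarz.

Section OperatorNorm.
Context {R : realType} {V W : lmodType R[i]}.
Context {ipV : V -> V -> R[i]} {ipW : W -> W -> R[i]}.
Hypotheses (ipVP : inner_product ipV) (ipWP : inner_product ipW).

Lemma bounded_opB (A B : V -> W) :
  bounded_op ipV ipW A -> bounded_op ipV ipW B ->
  bounded_op ipV ipW (fun x => A x - B x).
Proof.
move=> [MA A_le] [MB B_le]; exists (MA + MB) => x.
by apply: le_trans (ipnormB ipWP _ _) _; rewrite mulrDl lerD.
Qed.

Context {A : V -> W}.
Hypotheses (A0 : A 0 = 0) (A_bounded : bounded_op ipV ipW A).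

Let ratios := [set ipnorm ipW (A v) / ipnorm ipV v | v in [set v : V | v != 0]].

Let ratios_ubound : has_ubound ratios.
Proof.
case: A_bounded => M A_le; exists M => _ [v /= v_neq0 <-].
by rewrite ler_pdivrMr ?(ipnorm_gt0 ipVP).
Qed.

Lemma opnorm_ge0 : 0 <= opnorm ipV ipW A.
Proof.
have [[v v_neq0]|] := pselect (exists v : V, v != 0).
  apply: le_trans (ub_le_sup ratios_ubound (ex_intro2 _ _ v v_neq0 erefl)).
  by rewrite divr_ge0 ?ipnorm_ge0.
move=> no_nonzero; rewrite /opnorm (_ : [set _ | v in _] = set0) ?sup0 //.
by apply/seteqP; split => // _ [v /= v_neq0 _]; apply: no_nonzero; exists v.
Qed.

Lemma opnorm_le x : ipnorm ipW (A x) <= opnorm ipV ipW A * ipnorm ipV x.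
Proof.
have [->|x_neq0] := eqVneq x 0.
  by rewrite A0 (ipnorm0 ipWP) (ipnorm0 ipVP) mulr0.
rewrite -ler_pdivrMr ?(ipnorm_gt0 ipVP) //.
by apply: (ub_le_sup ratios_ubound); exists x.
Qed.

End OperatorNorm.

Section FormPerturbation.
Context {R : realType} {V0 : lmodType R[i]} {ip0 : V0 -> V0 -> R[i]}.
Hypothesis ip0P : inner_product ip0.
Context {V : lmodType R[i]} {ip : V -> V -> R[i]}.

Lemma cabs_ip_opnorm_le (A : V0 -> V0) (L : V -> V0) :
  A 0 = 0 -> bounded_op ip0 ip0 A ->
  (forall v, ipnorm ip0 (L v) <= ipnorm ip v) ->
  forall u v, cabs (ip0 (A (L u)) (L v)) <= opnorm ip0 ip0 A * ipnorm ip u * ipnorm ip v.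
Proof.
move=> A0 A_bounded L_le u v; apply: le_trans (cauchy_schwarz ip0P _ _) _.
apply: le_trans (ler_wpM2r (ipnorm_ge0 _) (opnorm_le ip0P ip0P A0 A_bounded _)) _.
rewrite -!mulrA ler_wpM2l ?(opnorm_ge0 ip0P) //.
by rewrite ler_pM ?ipnorm_ge0.
Qed.

Variables (iota D : {linear V -> V0}) (b : V -> V -> R[i]).
Hypotheses (iota_le : forall v, ipnorm ip0 (iota v) <= ipnorm ip v)
           (D_le : forall v, ipnorm ip0 (D v) <= ipnorm ip v).

Lemma aformB (mu1 mu2 e1 e2 : V0 -> V0) u v :
  aform ip0 iota D b mu1 e1 u v - aform ip0 iota D b mu2 e2 u v =
  ip0 (mu1 (D u) - mu2 (D u)) (D v) - ip0 (e1 (iota u) - e2 (iota u)) (iota v).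
Proof. by rewrite /aform !(ipBl ip0P); ring. Qed.

Lemma cabs_aform_perturb (mu1 mu2 e1 e2 : {linear V0 -> V0}) :
  bounded_op ip0 ip0 mu1 -> bounded_op ip0 ip0 mu2 ->
  bounded_op ip0 ip0 e1 -> bounded_op ip0 ip0 e2 ->
  forall u v, cabs (aform ip0 iota D b mu1 e1 u v) <=
    cabs (aform ip0 iota D b mu2 e2 u v) +
    (opnorm ip0 ip0 (fun x => mu1 x - mu2 x) + opnorm ip0 ip0 (fun x => e1 x - e2 x))
      * ipnorm ip u * ipnorm ip v.
Proof.
move=> mu1_b mu2_b e1_b e2_b u v.
rewrite -[aform _ _ _ _ mu1 e1 u v](subrK (aform ip0 iota D b mu2 e2 u v)) aformB.
apply: le_trans (cabsD _ _) _; rewrite [leLHS]addrC lerD2l.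
apply: le_trans (cabsB _ _) _; rewrite !mulrDl.
apply: lerD.
- apply: (cabs_ip_opnorm_le (fun x => mu1 x - mu2 x)) => //.
  + by rewrite !linear0 addr0.
  + exact: bounded_opB.
- apply: (cabs_ip_opnorm_le (fun x => e1 x - e2 x)) => //.
  + by rewrite !linear0 addr0.
  + exact: bounded_opB.
Qed.

End FormPerturbation.

Section InfSup.
Context {R : realType} {V : lmodType R[i]} {ip : V -> V -> R[i]} {HN : set V}.

Lemma infsup_perturb (a1 a2 : V -> V -> R[i]) (k c : R) : inner_product ip ->
  (forall u v, nonzero_in HN u -> nonzero_in HN v ->
     cabs (a1 u v) <= cabs (a2 u v) + c * ipnorm ip u * ipnorm ip v) ->
  (k%:E <= infsup ip HN a1)%E -> ((k - c)%:E <= infsup ip HN a2)%E.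
Proof.
move=> ipP a1_le /ereal_infP k_le; apply/ereal_infP => _ [u u_in <-].
rewrite EFinB leeBlDr //; apply: le_trans (k_le _ (ex_intro2 _ _ u u_in erefl)) _.
apply/ereal_supP => _ [v v_in <-]; rewrite -leeBlDr // -EFinB.
apply: le_trans (ereal_sup_ubound (ex_intro2 _ _ v v_in erefl)); rewrite lee_fin.
have uv_gt0 : 0 < ipnorm ip u * ipnorm ip v.
  by case: u_in v_in => _ u_neq0 [_ v_neq0]; rewrite mulr_gt0 ?(ipnorm_gt0 ipP).
by rewrite lerBlDr ler_pdivrMr // mulrDl divfK ?gt_eqF // mulrA a1_le.
Qed.

Lemma infsup_gt0_witness (a : V -> V -> R[i]) u :
  (0 < infsup ip HN a)%E -> nonzero_in HN u -> exists2 v, nonzero_in HN v & a u v != 0.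
Proof.
move=> infsup_gt0 u_in.
have /ereal_sup_gtP[_ [v v_in <-] ratio_gt0] :=
  lt_le_trans infsup_gt0 (ereal_inf_lbound (ex_intro2 _ _ u u_in erefl)).
exists v => //; apply: contraTneq ratio_gt0 => ->.
by rewrite /cabs Normc.normc0 mul0r ltxx.
Qed.

End InfSup.

Section SeqSpan.
Context {R : realType} {V : lmodType R[i]}.
Implicit Types (s : seq V) (u v w : V).

Definition seq_span s : set V :=
  [set v | exists c : 'I_(size s) -> R[i], v = \sum_(i < size s) c i *: s`_i].

Definition seq_free s : Prop :=
  forall c : 'I_(size s) -> R[i], \sum_(i < size s) c i *: s`_i = 0 -> forall i, c i = 0.

Lemma seq_span_cons x s v :
  seq_span (x :: s) v <-> exists a w, seq_span s w /\ v = a *: x + w.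
Proof.
split=> [[c ->]|[a [w [[c ->] ->]]]].
  rewrite /= big_ord_recl /=; exists (c ord0), (\sum_(i < size s) c (lift ord0 i) *: s`_i).
  by split=> //; exists (fun i => c (lift ord0 i)).
exists (fun i : 'I_(size s).+1 => if unlift ord0 i is Some j then c j else a).
rewrite /= big_ord_recl /= unlift_none; congr (_ + _).
by apply: eq_bigr => i _; rewrite liftK.
Qed.

Lemma seq_span0 s : seq_span s 0.
Proof. by exists (fun _ => 0); rewrite big1 // => i _; rewrite scale0r. Qed.

Lemma seq_spanZD s a u w : seq_span s u -> seq_span s w -> seq_span s (a *: u + w).
Proof.
move=> [c ->] [d ->]; exists (fun i => a * c i + d i).
rewrite scaler_sumr -big_split /=; apply: eq_bigr => i _.
by rewrite scalerDl scalerA.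
Qed.

Lemma seq_span_nth s (i : 'I_(size s)) : seq_span s s`_i.
Proof.
exists (fun j => (j == i)%:R); rewrite (bigD1 i) //= eqxx scale1r big1 ?addr0 //.
by move=> j /negbTE ->; rewrite scale0r.
Qed.

Lemma exists_free_span s : exists2 t, seq_span t = seq_span s & seq_free t.
Proof.
elim: s => [|x s [t span_t free_t]]; first by exists [::] => // c _ [].
have [x_in|x_notin] := pselect (seq_span t x).
  exists t => //; apply/seteqP; split=> v.
    by move=> v_in; apply/seq_span_cons; exists 0, v; rewrite -span_t scale0r add0r.
  by move=> /seq_span_cons [a [w [w_in ->]]]; apply: seq_spanZD x_in _; rewrite span_t.
exists (x :: t).
  apply/seteqP; split=> v /seq_span_cons [a [w [w_in ->]]]; apply/seq_span_cons.
    by exists a, w; rewrite -span_t.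
  by exists a, w; rewrite span_t.
move=> c; rewrite /= big_ord_recl /= => sum_eq0.
have c0 : c ord0 = 0.
  apply: contra_notP x_notin => /eqP c0_neq0.
  have -> : x = (- (c ord0)^-1) *: (\sum_(i < size t) c (lift ord0 i) *: t`_i) + 0.
    rewrite addr0; apply: (scalerI c0_neq0); rewrite scalerA mulrN mulfV // scaleN1r.
    by apply/eqP; rewrite -addr_eq0 sum_eq0.
  by apply: seq_spanZD; [exists (fun i => c (lift ord0 i)) | exact: seq_span0].
rewrite c0 scale0r add0r in sum_eq0.
move=> i; case: (unliftP ord0 i) => [j ->|->] //.
exact: (free_t (fun j => c (lift ord0 j)) sum_eq0).
Qed.

End SeqSpan.

Section SesquilinearForm.
Context {R : realType} {V : lmodType R[i]}.

Definition sesquilinear (a : V -> V -> R[i]) : Prop :=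
  (forall al u u' v, a (al *: u + u') v = al * a u v + a u' v) /\
  (forall al u v v', a u (al *: v + v') = conjc al * a u v + a u v').

Variable a : V -> V -> R[i].
Hypothesis aP : sesquilinear a.
Let a_linl := proj1 aP.
Let a_semilinr := proj2 aP.

Lemma sesq0l v : a 0 v = 0.
Proof.
apply: (addrI (a 0 v)); rewrite addr0 -{1}[a 0 v]mul1r -a_linl.
by rewrite scale1r addr0.
Qed.

Lemma sesq0r u : a u 0 = 0.
Proof.
apply: (addrI (a u 0)); rewrite addr0 -{1}[a u 0]mul1r -conjc1 -a_semilinr.
by rewrite scale1r addr0.
Qed.

Lemma sesq_suml n (c : 'I_n -> R[i]) (e : 'I_n -> V) w :
  a (\sum_(i < n) c i *: e i) w = \sum_(i < n) c i * a (e i) w.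
Proof. by elim/big_rec2: _ => [|i y1 y2 _ <-]; rewrite ?sesq0l ?a_linl. Qed.

Lemma sesq_sumr n (c : 'I_n -> R[i]) (e : 'I_n -> V) w :
  a w (\sum_(i < n) c i *: e i) = \sum_(i < n) conjc (c i) * a w (e i).
Proof. by elim/big_rec2: _ => [|i y1 y2 _ <-]; rewrite ?sesq0r ?a_semilinr. Qed.

Definition gram (t : seq V) : 'M[R[i]]_(size t) := \matrix_(i, j) a t`_i t`_j.

Lemma gram_unitmx t : seq_free t ->
  (forall u, seq_span t u -> u != 0 -> exists2 v, seq_span t v & a u v != 0) ->
  gram t \in unitmx.
Proof.
move=> free_t left_nondeg; rewrite -row_free_unit -kermx_eq0.
apply/rowV0P => w /sub_kermxP wG0.
set u := \sum_(i < size t) w 0 i *: t`_i.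
have u_in : seq_span t u by exists (fun i => w 0 i).
have u_orth (j : 'I_(size t)) : a u t`_j = 0.
  transitivity ((w *m gram t) 0 j); last by rewrite wG0 mxE.
  by rewrite sesq_suml mxE; apply: eq_bigr => i _; rewrite mxE.
have u0 : u = 0.
  apply/eqP; apply: contraT => /(left_nondeg u u_in) [_ [d ->]].
  by rewrite sesq_sumr big1 ?eqxx // => j _; rewrite u_orth mulr0.
by apply/matrixP => i j; rewrite mxE (ord1 i) (free_t _ u0).
Qed.

Lemma right_nondeg_of_left_nondeg t : seq_free t ->
  (forall u, seq_span t u -> u != 0 -> exists2 v, seq_span t v & a u v != 0) ->
  forall v, seq_span t v -> v != 0 -> exists2 u, seq_span t u & a u v != 0.
Proof.
move=> free_t left_nondeg v [d v_def] v_neq0; apply: contrapT => right_deg.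
pose x : 'cV[R[i]]_(size t) := \col_j conjc (d j).
have Gx0 : gram t *m x = 0.
  apply/matrixP => i j; rewrite !mxE.
  transitivity (a t`_i v); last first.
    by apply: (contra_notP _ right_deg) => /eqP ?; exists t`_i => //; apply: seq_span_nth.
  by rewrite v_def sesq_sumr; apply: eq_bigr => k _; rewrite !mxE mulrC.
have x0 : x = 0 by rewrite -(mulKmx (gram_unitmx _ free_t left_nondeg) x) Gx0 mulmx0.
move/eqP: v_neq0; apply; rewrite v_def big1 // => j _.
have /eqP := congr1 (fun m : 'cV[R[i]]_(size t) => m j 0) x0.
by rewrite !mxE conjc_eq0 => /eqP ->; rewrite scale0r.
Qed.

End SesquilinearForm.

Lemma adjoint_nondeg_of_infsup_gt0 {R : realType} {V : lmodType R[i]}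
    (ip : V -> V -> R[i]) (HN : set V) (a : V -> V -> R[i]) :
  sesquilinear a -> findim_subspace HN -> (0 < infsup ip HN a)%E -> adjoint_nondeg HN a.
Proof.
move=> aP [s HN_s] infsup_gt0 v [v_in v_neq0].
have [t span_t free_t] := exists_free_span s.
have HN_t : HN = seq_span t by rewrite HN_s span_t.
have left_nondeg u : seq_span t u -> u != 0 -> exists2 w, seq_span t w & a u w != 0.
  rewrite -HN_t => u_in u_neq0.
  by have [w [w_in _]] := infsup_gt0_witness _ _ infsup_gt0 (conj u_in u_neq0); exists w.
rewrite HN_t in v_in.
have [u u_in auv_neq0] :=
  right_nondeg_of_left_nondeg _ aP _ free_t left_nondeg _ v_in v_neq0.
have u_neq0 : u != 0 by apply: contraNneq auv_neq0 => ->; rewrite (sesq0l _ aP).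
apply: lt_le_trans (ereal_sup_ubound _); last by exists u; rewrite ?HN_t.
by rewrite lte_fin cabs_gt0.
Qed.

Section AformSesquilinear.
Context {R : realType} {V0 : lmodType R[i]} {ip0 : V0 -> V0 -> R[i]}.
Hypothesis ip0P : inner_product ip0.
Context {V : lmodType R[i]} {ip : V -> V -> R[i]}.
Variables (iota D : {linear V -> V0}) (b : V -> V -> R[i]) (mu eps : {linear V0 -> V0}).
Hypothesis bP : cont_sesquilinear ip b.

Lemma aform_sesquilinear : sesquilinear (aform ip0 iota D b mu eps).
Proof.
case: bP => b_linl b_semilinr _; split=> al u u' v; rewrite /aform !linearP.
  by rewrite b_linl !(ipDZl ip0P); ring.
by rewrite b_semilinr !(ipDr ip0P) !(ipZr ip0P); ring.
Qed.

End AformSesquilinear.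

Theorem lemma5p4 (R : realType)
  (V : lmodType R[i]) (ip : V -> V -> R[i])
  (V0 : lmodType R[i]) (ip0 : V0 -> V0 -> R[i])
  (iota : {linear V -> V0})
  (D : {linear V -> V0}) (b : V -> V -> R[i])
  (mu1inv mu2inv eps1 eps2 : {linear V0 -> V0})
  (CG11 CG21 CG12 CG22 : R)
  (HN : set V) (Cdis : R) :
  hilbert ip -> hilbert ip0 ->
  injective iota ->
  (forall v : V, ipnorm ip0 (iota v) <= ipnorm ip v) ->
  (forall v : V, ipnorm ip0 (D v) <= ipnorm ip v) ->
  cont_sesquilinear ip b ->
  bounded_op ip0 ip0 mu1inv -> bounded_op ip0 ip0 mu2inv ->
  bounded_op ip0 ip0 eps1 -> bounded_op ip0 ip0 eps2 ->
  0 < CG11 -> 0 < CG21 ->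
  (forall v : V, CG11 * ipnorm ip v ^+ 2 <=
     cabs (aform ip0 iota D b mu1inv eps1 v v + rC (CG21 * ipnorm ip0 (iota v) ^+ 2))) ->
  0 < CG12 -> 0 < CG22 ->
  (forall v : V, CG12 * ipnorm ip v ^+ 2 <=
     cabs (aform ip0 iota D b mu2inv eps2 v v + rC (CG22 * ipnorm ip0 (iota v) ^+ 2))) ->
  findim_subspace HN ->
  0 < Cdis ->
  ((Cdis^-1)%:E <= infsup ip HN (aform ip0 iota D b mu1inv eps1))%E ->
  adjoint_nondeg HN (aform ip0 iota D b mu1inv eps1) ->
  (opnorm ip0 ip0 (fun x => mu1inv x - mu2inv x)
     + opnorm ip0 ip0 (fun x => eps1 x - eps2 x)) * Cdis <= 2^-1 ->
  ((2 * Cdis)^-1%:E <= infsup ip HN (aform ip0 iota D b mu2inv eps2))%E /\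
  adjoint_nondeg HN (aform ip0 iota D b mu2inv eps2).
Proof.
move=> [ipP _] [ip0P _] _ iota_le D_le bP mu1_b mu2_b eps1_b eps2_b _ _ _ _ _ _
  HN_findim Cdis_gt0 infsup1 _ small_perturbation.
set c := opnorm _ _ _ + opnorm _ _ _ in small_perturbation.
have infsup2 : ((Cdis^-1 - c)%:E <= infsup ip HN (aform ip0 iota D b mu2inv eps2))%E.
  apply: (infsup_perturb _ _ _ _ ipP) infsup1 => u v _ _.
  exact: (cabs_aform_perturb ip0P).
have c_le : c <= 2^-1 / Cdis by rewrite ler_pdivlMr.
have half_le : (2 * Cdis)^-1 <= Cdis^-1 - c by rewrite invfM; lra.
split; first by apply: le_trans infsup2; rewrite lee_fin.
apply: adjoint_nondeg_of_infsup_gt0 (aform_sesquilinear ip0P _ _ _ _ _ bP) HN_findim _.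
by apply: lt_le_trans infsup2; rewrite lte_fin (lt_le_trans _ half_le) ?invr_gt0 ?mulr_gt0.
Qed.
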